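(* The image of $\bar\Gamma(2)_2=[\bar\Gamma(2),\bar\Gamma(2)]$ in $\mathrm{PSL}_2(\mathbb{Z}/3\mathbb{Z})$ is equal to $D_3$. For every prime $p>3$, its image in $\mathrm{PSL}_2(\mathbb{Z}/p\mathbb{Z})$ is $\mathrm{PSL}_2(\mathbb{Z}/p\mathbb{Z})$.
   Context: $\bar\Gamma(2)=\Gamma(2)/\{\pm1\}\subset\mathrm{PSL}_2(\mathbb{Z})$, where $\Gamma(2)$ is the principal congruence subgroup of level $2$; images are taken under the reduction maps $\mathrm{PSL}_2(\mathbb{Z})\to\mathrm{PSL}_2(\mathbb{Z}/n\mathbb{Z})$. $D_3\subset\mathrm{PSL}_2(\mathbb{Z}/3\mathbb{Z})$ is the index-$3$ subgroup (the $2$-Sylow subgroup, isomorphic to the Klein four-group) consisting of the classes of $\pm I$, $\pm\begin{pmatrix}0&-1\\1&0\end{pmatrix}$, $\pm\begin{pmatrix}-1&1\\1&1\end{pmatrix}$, $\pm\begin{pmatrix}1&1\\1&-1\end{pmatrix}$. *)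

From HB Require Import structures.
From mathcomp Require Import all_boot all_order all_algebra.
Set Implicit Arguments. Unset Strict Implicit. Unset Printing Implicit Defensive.
Import Order.TTheory GRing.Theory Num.Theory.
Local Open Scope ring_scope.

Definition Gamma2 (A : 'M[int]_2) : Prop :=
  \det A = 1 /\ forall i j : 'I_2, (2 %| A i j - (i == j)%:Z)%Z.

Definition commx (A B : 'M[int]_2) : 'M[int]_2 :=
  invmx A *m invmx B *m A *m B.

(* The commutator subgroup [Gamma(2), Gamma(2)] of SL_2(Z): finite products
   of commutators of elements of Gamma(2) (inverse of a commutator is a
   commutator, so this is the generated subgroup). *)
Inductive comm_Gamma2 : 'M[int]_2 -> Prop :=
| comm_Gamma2_1 : comm_Gamma2 1%:M
| comm_Gamma2_mul : forall A B C, Gamma2 A -> Gamma2 B -> comm_Gamma2 C ->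
    comm_Gamma2 (commx A B *m C).

(* Gbar2_2 = [Gbar(2), Gbar(2)] subset PSL_2(Z), described by the set of its
   representatives: M represents an element of it iff M or -M lies in
   [Gamma(2),Gamma(2)] (commutators in PSL_2 lift to commutators in SL_2,
   signs cancel). *)
Definition Gbar2_2 (M : 'M[int]_2) : Prop := comm_Gamma2 M \/ comm_Gamma2 (- M).

Definition redmx (p : nat) (M : 'M[int]_2) : 'M['F_p]_2 :=
  map_mx (fun z : int => z%:~R) M.

(* Image of Gbar2_2 in PSL_2(Z/pZ), as the (+-1-stable) set of representing
   matrices in SL_2(F_p). *)
Definition image_Gbar2_2 (p : nat) (N : 'M['F_p]_2) : Prop :=
  exists M, Gbar2_2 M /\ redmx p M = N.

Definition mx2 {R : Type} (a b c d : R) : 'M[R]_2 :=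
  \matrix_(i < 2, j < 2)
    if (i : nat) == 0%N then (if (j : nat) == 0%N then a else b)
    else (if (j : nat) == 0%N then c else d).

(* D_3 subset PSL_2(Z/3Z), as the set of its representatives in SL_2(F_3). *)
Definition D3 : seq 'M['F_3]_2 :=
  [:: mx2 1 0 0 1; mx2 (-1) 0 0 (-1);
      mx2 0 (-1) 1 0; mx2 0 1 (-1) 0;
      mx2 (-1) 1 1 1; mx2 1 (-1) (-1) (-1);
      mx2 1 1 1 (-1); mx2 (-1) (-1) (-1) 1].

(* Mod 3: D_3 is the quaternion subgroup of SL_2(F_3); it is normal with
   quotient of order 3, so it contains every commutator of SL_2(F_3), hence
   the reduction of [Gamma(2), Gamma(2)].  Conversely every element of D_3 is
   plus or minus a commutator of unipotents [[1, u], [0, 1]] and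
   [[1, 0], [v, 1]], which lift to Gamma(2) because 2 is invertible mod 3.
   These finite facts are checked by enumeration.
   Mod p > 3: X = [[-3, 2], [-6k-2, 4k+1]] lies in Gamma(2) for every integer
   k, and for 3k = -1 mod p it reduces to an upper triangular matrix with
   diagonal (-3, -1/3).  Its commutator with [[1, s], [0, 1]] is
   [[1, 8s/9], [0, 1]], so every upper unipotent, and symmetrically every
   lower one, lies in the image; these generate SL_2(F_p). *)

From HB Require Import structures.
From mathcomp Require Import all_boot all_order all_algebra.
From mathcomp Require Import ring.
Set Implicit Arguments. Unset Strict Implicit. Unset Printing Implicit Defensive.
Import Order.TTheory GRing.Theory Num.Theory.
Local Open Scope ring_scope.

Section Mx2.
Variable R : comPzRingType.
Implicit Types (a b c d e f g h : R) (A B : 'M[R]_2).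

Lemma mx2_eta A : A = mx2 (A 0 0) (A 0 1) (A 1 0) (A 1 1).
Proof.
by apply/matrixP => -[[|[|i]] Hi] [[|[|j]] Hj]; rewrite !mxE //=;
  congr (A _ _); apply/val_inj.
Qed.

Lemma mx2_1 : 1%:M = mx2 1 0 0 1 :> 'M[R]_2.
Proof. by apply/matrixP => -[[|[|i]] Hi] [[|[|j]] Hj]; rewrite !mxE. Qed.

Lemma opp_mx2 a b c d : - mx2 a b c d = mx2 (- a) (- b) (- c) (- d).
Proof. by apply/matrixP => -[[|[|i]] Hi] [[|[|j]] Hj]; rewrite !mxE. Qed.

Lemma mul_mx2 a b c d e f g h :
  mx2 a b c d *m mx2 e f g h = mx2 (a*e + b*g) (a*f + b*h) (c*e + d*g) (c*f + d*h).
Proof.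
by apply/matrixP => -[[|[|i]] Hi] [[|[|j]] Hj];
  rewrite !mxE big_ord_recl big_ord1 /= !mxE.
Qed.

Lemma det_mx2 a b c d : \det (mx2 a b c d) = a * d - b * c.
Proof.
rewrite (expand_det_row _ 0) big_ord_recl big_ord1 /cofactor !mxE /=.
by rewrite !det_mx11 !mxE /= expr0 expr1 mul1r mulN1r mulrN.
Qed.

Lemma adj_mx2 a b c d : \adj (mx2 a b c d) = mx2 d (- b) (- c) a.
Proof.
apply/matrixP => -[[|[|i]] Hi] [[|[|j]] Hj] //;
  rewrite !mxE /cofactor det_mx11 !mxE /= /bump /=.
all: by rewrite -signr_odd /= ?expr0 ?expr1 ?mul1r ?mulN1r.
Qed.

Lemma map_mx2 (S : Type) (F : R -> S) a b c d :
  map_mx F (mx2 a b c d) = mx2 (F a) (F b) (F c) (F d).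
Proof. by apply/matrixP => -[[|[|i]] Hi] [[|[|j]] Hj]; rewrite !mxE. Qed.

Lemma det_oppmx2 A : \det (- A) = \det A.
Proof. by rewrite [A]mx2_eta opp_mx2 !det_mx2 mulrNN mulrNN. Qed.

End Mx2.

Definition sl2_comm (R : comPzRingType) (A B : 'M[R]_2) : 'M[R]_2 :=
  \adj A *m \adj B *m A *m B.

Section SL2Commutators.
Variable R : comPzRingType.
Implicit Types (a b c d s : R).

Lemma sl2_comm_upper a b d s : a * d = 1 ->
  sl2_comm (mx2 a b 0 d) (mx2 1 s 0 1) = mx2 1 (s * (1 - d ^+ 2)) 0 1.
Proof. by move=> ad1; rewrite /sl2_comm !adj_mx2 !mul_mx2; congr mx2; ring: ad1. Qed.

Lemma sl2_comm_lower a c d s : a * d = 1 ->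
  sl2_comm (mx2 a 0 c d) (mx2 1 0 s 1) = mx2 1 0 (s * (1 - a ^+ 2)) 1.
Proof. by move=> ad1; rewrite /sl2_comm !adj_mx2 !mul_mx2; congr mx2; ring: ad1. Qed.

End SL2Commutators.

Lemma map_sl2_comm (R S : comPzRingType) (f : {rmorphism R -> S})
    (A B : 'M[R]_2) :
  map_mx f (sl2_comm A B) = sl2_comm (map_mx f A) (map_mx f B).
Proof. by rewrite /sl2_comm !map_mxM !map_mx_adj. Qed.

Section SL2Field.
Variable F : fieldType.
Implicit Types (a b c d : F) (M : 'M[F]_2).

Lemma mx2_unipotent_factor a b c d : a * d - b * c = 1 -> c != 0 ->
  mx2 a b c d = mx2 1 ((a - 1) / c) 0 1 *m mx2 1 0 c 1 *m mx2 1 ((d - 1) / c) 0 1.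
Proof.
move=> det1 c_neq0; have -> : b = (a * d - 1) / c by rewrite -det1; field.
by rewrite !mul_mx2; congr mx2; field.
Qed.

Lemma sl2_unipotent_ind (P : 'M[F]_2 -> Prop) :
  (forall t, P (mx2 1 t 0 1)) -> (forall t, P (mx2 1 0 t 1)) ->
  (forall M N, P M -> P N -> P (M *m N)) ->
  forall M, \det M = 1 -> P M.
Proof.
move=> PU PL PM.
have P_c_neq0 a b c d : a * d - b * c = 1 -> c != 0 -> P (mx2 a b c d).
  move=> det1 c_neq0; rewrite mx2_unipotent_factor //.
  exact: PM (PM _ _ (PU _) (PL _)) (PU _).
move=> M; rewrite [M]mx2_eta det_mx2.
move: (M 0 0) (M 0 1) (M 1 0) (M 1 1) => a b c d det1.
have [c0|] := eqVneq c 0; last exact: P_c_neq0.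
have d_neq0 : d != 0.
  by apply: contra_eq_neq det1 => ->; rewrite c0 !mulr0 subr0 eq_sym oner_eq0.
have -> : mx2 a b c d = mx2 (a + b) b d d *m mx2 1 0 (-1) 1.
  by rewrite mul_mx2 c0; congr mx2; ring.
by apply: PM (PL _); apply: P_c_neq0 => //; rewrite -det1 c0; ring.
Qed.

End SL2Field.

Lemma commxE (A B : 'M[int]_2) :
  \det A = 1 -> \det B = 1 -> commx A B = sl2_comm A B.
Proof. by move=> dA dB; rewrite /commx /invmx !unitmxE dA dB unitr1 invr1 !scale1r. Qed.

Lemma Gamma2_mx2 (a b c d : int) : a * d - b * c = 1 ->
  (2 %| a - 1)%Z -> (2 %| b)%Z -> (2 %| c)%Z -> (2 %| d - 1)%Z ->
  Gamma2 (mx2 a b c d).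
Proof.
move=> ad_bc ha hb hc hd; split; first by rewrite det_mx2.
by move=> -[[|[|i]] Hi] -[[|[|j]] Hj] //; rewrite mxE /= ?subr0.
Qed.

Lemma det_commx (A B : 'M[int]_2) :
  \det A = 1 -> \det B = 1 -> \det (commx A B) = 1.
Proof. by move=> dA dB; rewrite !det_mulmx !det_inv dA dB invr1 !mul1r. Qed.

Lemma comm_Gamma2_det C : comm_Gamma2 C -> \det C = 1.
Proof.
elim=> [|A B {}C [dA _] [dB _] _ dC]; first exact: det1.
by rewrite det_mulmx det_commx // dC mulr1.
Qed.

Lemma comm_Gamma2M C D : comm_Gamma2 C -> comm_Gamma2 D -> comm_Gamma2 (C *m D).
Proof.
elim=> [|A B {}C hA hB _ IH] hD; first by rewrite mul1mx.
by rewrite -mulmxA; constructor; last exact: IH.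
Qed.

Lemma Gbar2_2_det M : Gbar2_2 M -> \det M = 1.
Proof. by case=> /comm_Gamma2_det; rewrite ?det_oppmx2. Qed.

Lemma Gbar2_2N M : Gbar2_2 M -> Gbar2_2 (- M).
Proof. by rewrite /Gbar2_2 opprK => -[]; [right|left]. Qed.

Lemma Gbar2_2M M N : Gbar2_2 M -> Gbar2_2 N -> Gbar2_2 (M *m N).
Proof.
case=> hM [] hN.
- by left; exact: comm_Gamma2M.
- by right; rewrite -mulmxN; exact: comm_Gamma2M.
- by right; rewrite -mulNmx; exact: comm_Gamma2M.
- by left; rewrite -[M *m N]opprK -mulNmx -mulmxN; exact: comm_Gamma2M.
Qed.

Lemma Gbar2_2_commx A B : Gamma2 A -> Gamma2 B -> Gbar2_2 (commx A B).
Proof.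
by move=> hA hB; left; rewrite -[commx A B]mulmx1; constructor=> //; constructor.
Qed.

Section Image.
Variable p : nat.
Implicit Types N : 'M['F_p]_2.

Lemma image_Gbar2_2N N : image_Gbar2_2 N -> image_Gbar2_2 (- N).
Proof. by case=> M [hM <-]; exists (- M); split; [exact: Gbar2_2N|exact: map_mxN]. Qed.

Lemma image_Gbar2_2M N1 N2 :
  image_Gbar2_2 N1 -> image_Gbar2_2 N2 -> image_Gbar2_2 (N1 *m N2).
Proof.
by case=> [M1 [h1 <-]] [M2 [h2 <-]]; exists (M1 *m M2); split;
  [exact: Gbar2_2M|exact: map_mxM].
Qed.

Lemma image_Gbar2_2_comm A B : Gamma2 A -> Gamma2 B ->
  image_Gbar2_2 (sl2_comm (redmx p A) (redmx p B)).
Proof.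
move=> hA hB; exists (commx A B); split; first exact: Gbar2_2_commx.
by rewrite commxE ?(proj1 hA) ?(proj1 hB) // [redmx _ _]map_sl2_comm.
Qed.

Lemma image_Gbar2_2_det N : image_Gbar2_2 N -> \det N = 1.
Proof. by case=> M [/Gbar2_2_det dM <-]; rewrite det_map_mx dM rmorph1. Qed.

End Image.

Lemma Fp_int_lift p (x : 'F_p) : exists z : int, z%:~R = x.
Proof. by exists (val x)%:Z; rewrite -pmulrn natr_Zp. Qed.

Lemma redmx_mx2 p (a b c d : int) :
  redmx p (mx2 a b c d) = mx2 a%:~R b%:~R c%:~R d%:~R.
Proof. exact: map_mx2. Qed.

Lemma Gamma2_upper (n : int) : Gamma2 (mx2 1 (2 * n) 0 1).
Proof. by apply: Gamma2_mx2 => //; [ring|apply/dvdzP; exists n; ring]. Qed.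

Lemma Gamma2_lower (n : int) : Gamma2 (mx2 1 0 (2 * n) 1).
Proof. by apply: Gamma2_mx2 => //; [ring|apply/dvdzP; exists n; ring]. Qed.

Section OddCharacteristic.
Variable p : nat.
Hypothesis two_neq0 : (2 : 'F_p) != 0.

Lemma Fp_even_lift (x : 'F_p) : exists z : int, (2 * z)%:~R = x.
Proof.
have [z hz] := Fp_int_lift (x / 2); exists z.
by rewrite intrM hz; field.
Qed.

Lemma Gamma2_lift_upper s : exists2 Y, Gamma2 Y & redmx p Y = mx2 1 s 0 1.
Proof.
have [z hz] := Fp_even_lift s; exists (mx2 1 (2 * z) 0 1); first exact: Gamma2_upper.
by rewrite redmx_mx2 hz.
Qed.

Lemma Gamma2_lift_lower s : exists2 Y, Gamma2 Y & redmx p Y = mx2 1 0 s 1.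
Proof.
have [z hz] := Fp_even_lift s; exists (mx2 1 0 (2 * z) 1); first exact: Gamma2_lower.
by rewrite redmx_mx2 hz.
Qed.

Lemma image_Gbar2_2_comm_unipotents s t :
  image_Gbar2_2 (sl2_comm (mx2 1 s 0 1) (mx2 1 0 t 1) : 'M['F_p]_2).
Proof.
have [[U hU <-] [L hL <-]] := (Gamma2_lift_upper s, Gamma2_lift_lower t).
exact: image_Gbar2_2_comm.
Qed.

Hypothesis three_neq0 : (3 : 'F_p) != 0.

Let eight_neq0 : (8 : 'F_p) != 0.
Proof. by rewrite (_ : 8 = 2 ^+ 3) ?expf_neq0 // -natrX. Qed.

Lemma Gamma2_lift_upper_triangular :
  exists2 X, Gamma2 X & redmx p X = mx2 (-3) 2 0 (- 3^-1).
Proof.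
have [k hk] := Fp_int_lift (- 3^-1 : 'F_p).
exists (mx2 (-3) 2 (-6 * k - 2) (4 * k + 1)).
  by apply: Gamma2_mx2 => //; [|apply/dvdzP; exists (-3 * k - 1)
    |apply/dvdzP; exists (2 * k)]; ring.
by rewrite redmx_mx2; congr mx2; rewrite ?(intrD, intrM, intrN) hk; field.
Qed.

Lemma Gamma2_lift_lower_triangular :
  exists2 X, Gamma2 X & redmx p X = mx2 (- 3^-1) 0 2 (-3).
Proof.
have [k hk] := Fp_int_lift (- 3^-1 : 'F_p).
exists (mx2 (4 * k + 1) (-6 * k - 2) 2 (-3)).
  by apply: Gamma2_mx2 => //; [|apply/dvdzP; exists (2 * k)
    |apply/dvdzP; exists (-3 * k - 1)]; ring.
by rewrite redmx_mx2; congr mx2; rewrite ?(intrD, intrM, intrN) hk; field.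
Qed.

Lemma image_Gbar2_2_upper t : image_Gbar2_2 (mx2 1 t 0 1 : 'M['F_p]_2).
Proof.
have [X hX rX] := Gamma2_lift_upper_triangular.
have [Y hY rY] := Gamma2_lift_upper (9 * t / 8).
have := image_Gbar2_2_comm p hX hY; rewrite rX rY sl2_comm_upper; last by field.
by rewrite (_ : 9 * t / 8 * _ = t) //; field; rewrite three_neq0 eight_neq0.
Qed.

Lemma image_Gbar2_2_lower t : image_Gbar2_2 (mx2 1 0 t 1 : 'M['F_p]_2).
Proof.
have [X hX rX] := Gamma2_lift_lower_triangular.
have [Y hY rY] := Gamma2_lift_lower (9 * t / 8).
have := image_Gbar2_2_comm p hX hY; rewrite rX rY sl2_comm_lower; last by field.
by rewrite (_ : 9 * t / 8 * _ = t) //; field; rewrite three_neq0 eight_neq0.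
Qed.

Lemma image_Gbar2_2_SL2 (N : 'M['F_p]_2) : \det N = 1 -> image_Gbar2_2 N.
Proof.
apply: sl2_unipotent_ind; [exact: image_Gbar2_2_upper|exact: image_Gbar2_2_lower|].
exact: image_Gbar2_2M.
Qed.

End OddCharacteristic.

(* Matrices do not reduce under computation, so the finite checks over
   SL_2(F_3) below are run on quadruples of entries. *)
Definition quad (R : Type) := (R * R * R * R)%type.

Definition mx_of_quad (R : Type) (q : quad R) : 'M[R]_2 :=
  let: (a, b, c, d) := q in mx2 a b c d.

Definition quad_of_mx (R : Type) (M : 'M[R]_2) : quad R :=
  (M 0 0, M 0 1, M 1 0, M 1 1).

Section Quad.
Variable R : comPzRingType.
Implicit Types q r : quad R.

Definition quad_mul q r : quad R :=
  let: (a, b, c, d) := q in let: (e, f, g, h) := r in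
  (a * e + b * g, a * f + b * h, c * e + d * g, c * f + d * h).

Definition quad_adj q : quad R := let: (a, b, c, d) := q in (d, - b, - c, a).

Definition quad_opp q : quad R := let: (a, b, c, d) := q in (- a, - b, - c, - d).

Definition quad_det q : R := let: (a, b, c, d) := q in a * d - b * c.

Definition quad_comm q r : quad R :=
  quad_mul (quad_mul (quad_mul (quad_adj q) (quad_adj r)) q) r.

Lemma mx_of_quadK : cancel (@mx_of_quad R) (@quad_of_mx R).
Proof. by case=> [[[a b] c] d]; rewrite /quad_of_mx /= !mxE. Qed.

Lemma quad_of_mxK : cancel (@quad_of_mx R) (@mx_of_quad R).
Proof. by move=> M; rewrite [RHS]mx2_eta. Qed.

Lemma mx_of_quadM q r : mx_of_quad (quad_mul q r) = mx_of_quad q *m mx_of_quad r.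
Proof. by case: q => [[[a b] c] d]; case: r => [[[e f] g] h]; rewrite mul_mx2. Qed.

Lemma mx_of_quad_adj q : mx_of_quad (quad_adj q) = \adj (mx_of_quad q).
Proof. by case: q => [[[a b] c] d]; rewrite adj_mx2. Qed.

Lemma quad_oppK : involutive quad_opp.
Proof. by case=> [[[a b] c] d]; rewrite /= !opprK. Qed.

Lemma mx_of_quad_opp q : mx_of_quad (quad_opp q) = - mx_of_quad q.
Proof. by case: q => [[[a b] c] d]; rewrite opp_mx2. Qed.

Lemma det_mx_of_quad q : \det (mx_of_quad q) = quad_det q.
Proof. by case: q => [[[a b] c] d]; rewrite det_mx2. Qed.

Lemma mx_of_quad_comm q r :
  mx_of_quad (quad_comm q r) = sl2_comm (mx_of_quad q) (mx_of_quad r).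
Proof. by rewrite !mx_of_quadM !mx_of_quad_adj. Qed.

End Quad.

Definition F3_elems : seq 'F_3 := [:: 0; 1; -1].

Lemma mem_F3_elems (x : 'F_3) : x \in F3_elems.
Proof. by case: x => -[|[|[|n]]]. Qed.

Definition all_quad3 (P : pred (quad 'F_3)) : bool :=
  all (fun a => all (fun b => all (fun c => all (fun d => P (a, b, c, d))
    F3_elems) F3_elems) F3_elems) F3_elems.

Lemma all_quad3P P : all_quad3 P -> forall q, P q.
Proof.
move=> hP [[[a b] c] d].
by move: hP => /allP/(_ a (mem_F3_elems a)) /allP/(_ b (mem_F3_elems b))
  /allP/(_ c (mem_F3_elems c)) /allP/(_ d (mem_F3_elems d)).
Qed.

Definition D3q : seq (quad 'F_3) :=
  [:: (1, 0, 0, 1); (-1, 0, 0, -1); (0, -1, 1, 0); (0, 1, -1, 0);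
      (-1, 1, 1, 1); (1, -1, -1, -1); (1, 1, 1, -1); (-1, -1, -1, 1)].

Lemma D3E : D3 = map (@mx_of_quad _) D3q. Proof. by []. Qed.

Lemma mem_D3 q : (mx_of_quad q \in D3) = (q \in D3q).
Proof. by rewrite D3E mem_map //; exact: can_inj (@mx_of_quadK _). Qed.

Lemma D3q_mul : all (fun q => all (fun r => quad_mul q r \in D3q) D3q) D3q.
Proof. by vm_compute. Qed.

Lemma D3q_comm : all_quad3 (fun q => all_quad3 (fun r =>
  (quad_det q == 1) ==> (quad_det r == 1) ==> (quad_comm q r \in D3q))).
Proof. by vm_compute. Qed.

Lemma D3M (N1 N2 : 'M['F_3]_2) : N1 \in D3 -> N2 \in D3 -> N1 *m N2 \in D3.
Proof.
rewrite D3E => /mapP[q1 q1D3 ->] /mapP[q2 q2D3 ->].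
by rewrite -mx_of_quadM -D3E mem_D3; exact: (allP (allP D3q_mul _ q1D3)).
Qed.

Lemma D3N (N : 'M['F_3]_2) : N \in D3 -> - N \in D3.
Proof.
move=> ND3; rewrite -[N in - N]mul1mx -mulNmx; apply: D3M ND3.
by rewrite mx2_1 opp_mx2 oppr0 !inE eqxx orbT.
Qed.

Lemma D3_sl2_comm (A B : 'M['F_3]_2) :
  \det A = 1 -> \det B = 1 -> sl2_comm A B \in D3.
Proof.
rewrite -[A]quad_of_mxK -[B]quad_of_mxK -mx_of_quad_comm mem_D3 !det_mx_of_quad.
move=> dA dB; have := all_quad3P D3q_comm (quad_of_mx A).
by move/all_quad3P/(_ (quad_of_mx B)); rewrite dA dB eqxx.
Qed.

Lemma comm_Gamma2_D3 C : comm_Gamma2 C -> redmx 3 C \in D3.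
Proof.
elim=> [|A B {}C [dA _] [dB _] _ C_D3].
  by rewrite /redmx map_mx1 mx2_1 inE eqxx.
rewrite /redmx map_mxM commxE // map_sl2_comm.
by apply: D3M C_D3; apply: D3_sl2_comm; rewrite det_map_mx ?dA ?dB rmorph1.
Qed.

Lemma image_Gbar2_2_D3 (N : 'M['F_3]_2) : image_Gbar2_2 N -> N \in D3.
Proof.
case=> M [[|] /comm_Gamma2_D3 + <-] //.
by rewrite /redmx map_mxN => /D3N; rewrite opprK.
Qed.

Definition comm_unipotents3 : seq (quad 'F_3) :=
  [seq quad_comm (1, u, 0, 1) (1, 0, v, 1) | u <- F3_elems, v <- F3_elems].

Lemma D3q_pm_comm_unipotents : all (fun q =>
  has (fun c => (q == c) || (quad_opp q == c)) comm_unipotents3) D3q.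
Proof. by vm_compute. Qed.

Lemma D3_image_Gbar2_2 (N : 'M['F_3]_2) : N \in D3 -> image_Gbar2_2 N.
Proof.
rewrite D3E => /mapP[q /(allP D3q_pm_comm_unipotents)/hasP[c c_in qc] ->].
have {c_in} image_c : image_Gbar2_2 (mx_of_quad c).
  case/allpairsPdep: c_in => u [v [_ _ ->]].
  by rewrite mx_of_quad_comm; exact: image_Gbar2_2_comm_unipotents.
case/orP: qc => /eqP qc; first by rewrite qc.
by rewrite -[q]quad_oppK qc mx_of_quad_opp; exact: image_Gbar2_2N.
Qed.

Lemma Fp_nat_neq0 p n : prime p -> (0 < n < p)%N -> (n%:R : 'F_p) != 0.
Proof.
move=> p_pr /andP[n_gt0 n_ltp]; rewrite -(dvdn_pcharf (pchar_Fp p_pr)).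
by apply/negP => /(dvdn_leq n_gt0); rewrite leqNgt n_ltp.
Qed.

Theorem proposition12 :
  (forall N : 'M['F_3]_2, image_Gbar2_2 N <-> N \in D3) /\
  (forall p : nat, prime p -> (3 < p)%N ->
     forall N : 'M['F_p]_2, \det N = 1 <-> image_Gbar2_2 N).
Proof.
split=> [N | p p_pr p_gt3 N].
  by split; [exact: image_Gbar2_2_D3 | exact: D3_image_Gbar2_2].
split; last exact: image_Gbar2_2_det.
by apply: image_Gbar2_2_SL2; apply: Fp_nat_neq0; rewrite //= ltnW.
Qed.
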